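(* There are absolute constants $C,c>0$ such that the following holds. Let $P$ be a set of $n$ points in $\mathbb{R}^2$ in general position, let $\Pi\subseteq\binom{P}{2}$, let $0<\epsilon\le 1$, $0<\sigma\le 1$, and let $r\ge1$ be an integer. Then every subfamily ${\cal K}\subseteq{\cal K}(P,\Pi,\epsilon,\sigma)$ admits a point transversal (a set of points meeting every member of ${\cal K}$) of cardinality at most $$C\left(r\cdot f_2(c\,\epsilon\,\sigma\, r)+\frac{r^2|\Pi|}{\sigma\,\epsilon^2 n^2}\right).$$
   Context: General position: no three points of $P$ are collinear and no two lie on a common vertical line. $\binom{P}{2}$ denotes the set of all segments (edges) spanned by pairs of points of $P$. A convex set $K$ is $(\epsilon,\sigma)$-restricted to the graph $(P,\Pi)$ if $P\cap K$ contains a subset $P_K$ of exactly $\lceil\epsilon n\rceil$ points such that $\Pi_K:=\binom{P_K}{2}\cap\Pi$ contains at least $\sigma\binom{\lceil \epsilon n\rceil}{2}$ edges. ${\cal K}(P,\Pi,\epsilon,\sigma)$ denotes the family of all convex sets that are $(\epsilon,\sigma)$-restricted to $(P,\Pi)$. $f_2(x)$ denotes the smallest integer $f$ such that every finite point set $P'\subset\mathbb{R}^2$ admits a set of at most $f$ points meeting every convex set $K$ with $|K\cap P'|\ge x|P'|$; by convention $f_2(x)=1$ for $x\ge 1$. *)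

From Stdlib Require Import Reals List ClassicalEpsilon.
Import ListNotations.
Open Scope R_scope.

Definition point : Type := (R * R)%type.

Definition pcomb (t : R) (p q : point) : point :=
  ((1 - t) * fst p + t * fst q, (1 - t) * snd p + t * snd q).

Definition convex (K : point -> Prop) : Prop :=
  forall p q t, K p -> K q -> 0 <= t <= 1 -> K (pcomb t p q).

Definition collinear (a b c : point) : Prop :=
  (fst b - fst a) * (snd c - snd a) - (snd b - snd a) * (fst c - fst a) = 0.

Definition general_position (P : list point) : Prop :=
  NoDup P /\
  (forall a b c, In a P -> In b P -> In c P -> a <> b -> a <> c -> b <> c ->
     ~ collinear a b c) /\
  (forall a b, In a P -> In b P -> a <> b -> fst a <> fst b).

Fixpoint pairs (l : list point) : list (point * point) :=
  match l with
  | [] => []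
  | x :: l' => map (fun y => (x, y)) l' ++ pairs l'
  end.

(* a graph Pi ⊆ binom(P,2) is given by a symmetric boolean edge predicate E;
   its edge set on a point list Q is the set of pairs of Q that are edges *)
Definition num_edges (E : point -> point -> bool) (Q : list point) : nat :=
  length (filter (fun e => E (fst e) (snd e)) (pairs Q)).

Definition restricted (P : list point) (E : point -> point -> bool)
    (eps sigma : R) (K : point -> Prop) : Prop :=
  exists PK : list point,
    NoDup PK /\ incl PK P /\ Forall K PK /\
    (* length PK = ceil (eps * n) *)
    eps * INR (length P) <= INR (length PK) < eps * INR (length P) + 1 /\
    sigma * (INR (length PK) * (INR (length PK) - 1) / 2) <= INR (num_edges E PK).

Definition in_calK (P : list point) (E : point -> point -> bool)
    (eps sigma : R) (K : point -> Prop) : Prop :=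
  convex K /\ restricted P E eps sigma K.

Definition wenet_bound (x : R) (f : nat) : Prop :=
  forall P' : list point, NoDup P' -> P' <> [] ->
    exists T : list point, (length T <= f)%nat /\
      forall K : point -> Prop, convex K ->
        (exists S : list point, NoDup S /\ incl S P' /\ Forall K S /\
            x * INR (length P') <= INR (length S)) ->
        exists t, In t T /\ K t.

Definition f2 (x : R) : nat :=
  if Rle_dec 1 x then 1%nat
  else epsilon (inhabits 0%nat)
         (fun f => wenet_bound x f /\ forall g, wenet_bound x g -> (f <= g)%nat).

(* Split [P] recursively by vertical lines into about [r] groups of about [n / r] points. Each
   group receives a weak epsilon-net with parameter [eps sigma r / 8]; on each splitting line we
   place a point at every [T]-th height where edges of [Pi] cross it, with
   [T ~ sigma eps^2 n^2 / r]. A convex set missing all these points contains fewer than [T] edges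
   across each line and at most [sigma eps n / 4] points of each group, which leaves it too few
   edges to be restricted. The existence of weak epsilon-nets, needed for [f2] to be
   meaningful, follows from the same halving construction applied to the complete graph. *)

From Stdlib Require Import Reals List Bool ZArith Lra Lia Permutation Sorted Wf_nat.
From Stdlib Require Import Classical ClassicalEpsilon.
Import ListNotations.
Open Scope R_scope.

Lemma Permutation_filter {A} (g : A -> bool) (l l' : list A) :
  Permutation l l' -> Permutation (filter g l) (filter g l').
Proof.
  induction 1 as [| x l l' _ IH | x y l | l l' l'' _ IH1 _ IH2]; simpl; auto.
  - destruct (g x); auto.
  - destruct (g x), (g y); auto using perm_swap.
  - eauto using Permutation_trans.
Qed.

Lemma filter_filter {A} (f g : A -> bool) (l : list A) :
  filter f (filter g l) = filter (fun a => g a && f a) l.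
Proof.
  induction l as [|a l IH]; simpl; auto. destruct (g a); simpl; destruct (f a); simpl; congruence.
Qed.

Lemma existsb_false_filter {A} (g : A -> bool) (l : list A) :
  existsb g l = false -> filter g l = [].
Proof. induction l as [|a l IH]; simpl; auto. destruct (g a); simpl; auto; discriminate. Qed.

Lemma StronglySorted_app_inv {A} (Rl : A -> A -> Prop) (l1 l2 : list A) :
  StronglySorted Rl (l1 ++ l2) ->
  StronglySorted Rl l1 /\ StronglySorted Rl l2 /\ forall a b, In a l1 -> In b l2 -> Rl a b.
Proof.
  induction l1 as [|x l1 IH]; simpl; intros H.
  - repeat split; auto; [constructor | intros _ _ []].
  - apply StronglySorted_inv in H as [H Hx]. destruct (IH H) as (S1 & S2 & H12).
    rewrite Forall_forall in Hx.
    repeat split; auto.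
    + constructor; auto. apply Forall_forall. intros y Hy. apply Hx, in_or_app; auto.
    + intros a b [<-|Ha] Hb; auto. apply Hx, in_or_app; auto.
Qed.

(** * Quantiles *)

Section Quantiles.
Variables (A : Type) (h : A -> R).
Local Notation sorted := (StronglySorted (fun a b => h a <= h b)).

Lemma sorted_insert a l : sorted l -> exists l', Permutation (a :: l) l' /\ sorted l'.
Proof.
  induction l as [|b l IH]; intros Hl.
  - exists [a]; split; repeat constructor.
  - apply StronglySorted_inv in Hl as [Hl Hb]. rewrite Forall_forall in Hb.
    destruct (Rle_dec (h a) (h b)) as [Hab|Hab].
    + exists (a :: b :: l); split; [reflexivity|].
      constructor; [constructor; auto; apply Forall_forall; auto|].
      constructor; [lra|]. apply Forall_forall. intros y Hy. specialize (Hb y Hy). lra.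
    + destruct (IH Hl) as (l' & Hp & Hs). exists (b :: l'); split.
      * rewrite perm_swap. constructor; auto.
      * constructor; auto. apply Forall_forall. intros y Hy.
        apply (Permutation_in _ (Permutation_sym Hp)) in Hy as [<-|Hy]; [lra|auto].
Qed.

Lemma sorted_permutation_exists l : exists l', Permutation l l' /\ sorted l'.
Proof.
  induction l as [|a l (l1 & P1 & S1)]; [exists []; split; constructor|].
  destruct (sorted_insert a l1 S1) as (l2 & P2 & S2).
  exists l2; split; auto. rewrite P1; exact P2.
Qed.

Definition quantile_net (L : list A) (T : nat) (Z : list R) : Prop :=
  forall g : A -> bool, (T <= length (filter g L))%nat ->
    exists z, In z Z /\ exists i j, In i L /\ g i = true /\ In j L /\ g j = true /\ h i <= z <= h j.

(* Take every [T]-th value along the sorted list. *)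
Lemma sorted_quantile_net T : (0 < T)%nat -> forall L, sorted L ->
  exists Z, (length Z * T <= length L)%nat /\ quantile_net L T Z.
Proof.
  intros HT L. induction L as [L IH] using (induction_ltof1 _ (@length A)); intros HL.
  destruct (Nat.lt_ge_cases (length L) T) as [Hs|Hs].
  { exists []; split; [simpl; lia|]. intros g Hg. pose proof (filter_length_le g L). lia. }
  destruct (exists_last (l := firstn T L)) as (C & c & HC).
  { intro E. apply (f_equal (@length A)) in E. rewrite length_firstn in E. simpl in E. lia. }
  pose proof (firstn_skipn T L) as HL'. rewrite HC in HL'. set (D := skipn T L) in HL'.
  assert (HlC : length (C ++ [c]) = T) by (rewrite <- HC, length_firstn; lia).
  rewrite <- HL' in HL. apply StronglySorted_app_inv in HL as (SC & SD & HCD).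
  assert (Hc : forall i, In i (C ++ [c]) -> h i <= h c).
  { intros i Hi. apply StronglySorted_app_inv in SC as (_ & _ & H).
    apply in_app_or in Hi as [Hi|[<-|[]]]; [apply H; simpl; auto|lra]. }
  destruct (IH D) as (Z & HZ & HZnet); auto.
  { unfold ltof, D. rewrite length_skipn. lia. }
  exists (h c :: Z); split.
  { rewrite <- HL', length_app, HlC. simpl. lia. }
  assert (HinL : forall y, In y (C ++ [c]) \/ In y D -> In y L)
    by (intros y Hy; rewrite <- HL'; apply in_or_app; exact Hy).
  intros g Hg. rewrite <- HL', filter_app, length_app in Hg.
  destruct (existsb g D) eqn:ED.
  - apply existsb_exists in ED as (j & Hj & Gj).
    destruct (existsb g (C ++ [c])) eqn:EC.
    + apply existsb_exists in EC as (i & Hi & Gi).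
      exists (h c); split; [left; auto|]. exists i, j. repeat split; auto.
      apply (HCD c j); auto. apply in_or_app; right; left; auto.
    + rewrite (existsb_false_filter g _ EC) in Hg.
      destruct (HZnet g ltac:(simpl in Hg; lia)) as (z & Hz & i & j' & H).
      exists z; split; [right; auto|]. exists i, j'. intuition.
  - rewrite (existsb_false_filter g _ ED) in Hg.
    assert (Hall : forallb g (C ++ [c]) = true).
    { apply filter_length_forallb, Nat.le_antisymm; [apply filter_length_le|simpl in Hg; lia]. }
    rewrite forallb_forall in Hall.
    assert (Incl : In c (C ++ [c])) by (apply in_or_app; right; left; auto).
    exists (h c); split; [left; auto|]. exists c, c. repeat split; auto; lra.
Qed.

Lemma quantile_net_exists T L : (0 < T)%nat ->
  exists Z, (length Z * T <= length L)%nat /\ quantile_net L T Z.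
Proof.
  intros HT. destruct (sorted_permutation_exists L) as (L' & HP & HS).
  destruct (sorted_quantile_net T HT L' HS) as (Z & HZ & Hnet).
  exists Z; split; [rewrite (Permutation_length HP); auto|].
  intros g Hg. rewrite (Permutation_length (Permutation_filter g _ _ HP)) in Hg.
  destruct (Hnet g Hg) as (z & Hz & i & j & Hi & Gi & Hj & Gj & Hij).
  apply (Permutation_in _ (Permutation_sym HP)) in Hi, Hj.
  exists z; split; auto. exists i, j; auto.
Qed.

End Quantiles.

(** * Vertical lines *)

Definition meets (T : list point) (K : point -> Prop) : Prop := exists t, In t T /\ K t.

Lemma Rdiv_unit_interval u v : 0 <= u <= v -> 0 < v -> 0 <= u / v <= 1.
Proof.
  intros H Hv. split.
  - apply Rmult_le_pos; [lra|]. apply Rlt_le, Rinv_0_lt_compat; lra.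
  - apply Rmult_le_reg_r with v; [lra|]. unfold Rdiv. rewrite Rmult_assoc, Rinv_l; lra.
Qed.

(* The point of the segment [a b] on the vertical line [x = x0]; junk value [a] when the
   segment is vertical. *)
Definition vertical_crossing (x0 : R) (a b : point) : point :=
  if Req_EM_T (fst a) (fst b) then a else pcomb ((x0 - fst a) / (fst b - fst a)) a b.

Lemma vertical_crossing_fst x0 a b : fst a <= x0 <= fst b -> fst (vertical_crossing x0 a b) = x0.
Proof.
  intros H. unfold vertical_crossing. destruct (Req_EM_T (fst a) (fst b)); [lra|].
  unfold pcomb; simpl. field. lra.
Qed.

Lemma convex_vertical_crossing K x0 a b : convex K -> K a -> K b ->
  fst a <= x0 <= fst b -> K (vertical_crossing x0 a b).
Proof.
  intros HK Ha Hb H. unfold vertical_crossing. destruct (Req_EM_T (fst a) (fst b)); auto.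
  apply HK; auto. apply Rdiv_unit_interval; lra.
Qed.

Lemma convex_vertical_segment K x0 p q y : convex K -> K (x0, p) -> K (x0, q) ->
  p <= y <= q -> K (x0, y).
Proof.
  intros HK Hp Hq Hy. destruct (Req_EM_T p q) as [<-|Hpq]; [replace y with p by lra; auto|].
  replace (x0, y) with (pcomb ((y - p) / (q - p)) (x0, p) (x0, q)).
  - apply HK; auto. apply Rdiv_unit_interval; lra.
  - unfold pcomb; simpl. f_equal; field; lra.
Qed.

Definition pair_net (Pr : list (point * point)) (T : nat) (Z : list point) : Prop :=
  forall (g : point * point -> bool) (K : point -> Prop), convex K ->
    (forall pr, In pr Pr -> g pr = true -> K (fst pr) /\ K (snd pr)) ->
    (T <= length (filter g Pr))%nat -> meets Z K.

(* The convex hull of two crossing segments in [K] contains the part of the line between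
   their crossing points, so quantiles of the crossing heights form a pair net. *)
Lemma vertical_pair_net_exists x0 (Pr : list (point * point)) T : (0 < T)%nat ->
  (forall pr, In pr Pr -> fst (fst pr) <= x0 <= fst (snd pr)) ->
  exists Z, (length Z * T <= length Pr)%nat /\ pair_net Pr T Z.
Proof.
  intros HT HPr.
  set (height pr := snd (vertical_crossing x0 (fst pr) (snd pr))).
  destruct (quantile_net_exists _ height T Pr HT) as (Zy & HZ & Hnet).
  exists (map (fun y => (x0, y)) Zy). split; [rewrite length_map; auto|].
  intros g K HK Hg Hc.
  destruct (Hnet g Hc) as (y & Hy & i & j & Hi & Gi & Hj & Gj & Hij).
  exists (x0, y); split; [apply in_map; auto|].
  assert (Hcross : forall pr, In pr Pr -> g pr = true ->
            K (x0, height pr)).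
  { intros pr Hpr Gpr. destruct (Hg pr Hpr Gpr) as [Ka Kb].
    rewrite <- (vertical_crossing_fst x0 (fst pr) (snd pr)) at 1 by auto.
    rewrite <- surjective_pairing. apply convex_vertical_crossing; auto. }
  apply (convex_vertical_segment K x0 (height i) (height j)); auto.
Qed.

Lemma le_fold_Rmax (l : list point) p : In p l -> fst p <= fold_right (fun q m => Rmax (fst q) m) 0 l.
Proof.
  induction l as [|q l IH]; simpl; [tauto|]. intros [<-|Hp]; [apply Rmax_l|].
  eapply Rle_trans; [apply IH; auto|apply Rmax_r].
Qed.

Lemma vertical_halving (Q : list point) k : (k <= length Q)%nat ->
  exists L R x0, Permutation Q (L ++ R) /\ length L = k /\
    (forall a, In a L -> fst a <= x0) /\ (forall b, In b R -> x0 <= fst b).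
Proof.
  intros Hk. destruct (sorted_permutation_exists point fst Q) as (Q' & HP & HS).
  pose proof (firstn_skipn k Q') as HQ'. rewrite <- HQ' in HS, HP.
  apply StronglySorted_app_inv in HS as (_ & SR & HLR).
  assert (HL : length (firstn k Q') = k)
    by (pose proof (Permutation_length HP) as E; rewrite HQ' in E; rewrite length_firstn; lia).
  destruct (skipn k Q') as [|b R] eqn:ER.
  - exists (firstn k Q'), [], (fold_right (fun q m => Rmax (fst q) m) 0 (firstn k Q')).
    repeat split; auto; [apply le_fold_Rmax | intros _ []].
  - exists (firstn k Q'), (b :: R), (fst b). repeat split; auto.
    + intros a Ha. apply HLR; simpl; auto.
    + apply StronglySorted_inv in SR as [_ Hb]. rewrite Forall_forall in Hb.
      intros b' [<-|Hb']; [lra|auto].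
Qed.

Definition crossing_edges (E : point -> point -> bool) (L R : list point) : list (point * point) :=
  filter (fun pr => E (fst pr) (snd pr)) (list_prod L R).

Lemma num_edges_app E L R :
  num_edges E (L ++ R) = (num_edges E L + num_edges E R + length (crossing_edges E L R))%nat.
Proof.
  unfold num_edges, crossing_edges. induction L as [|a L IH]; simpl; [lia|].
  rewrite !filter_app, !length_app, map_app, filter_app, length_app, IH. lia.
Qed.

Lemma num_edges_cons E a l :
  num_edges E (a :: l) = (length (filter (E a) l) + num_edges E l)%nat.
Proof.
  unfold num_edges. simpl. rewrite filter_app, length_app. f_equal.
  induction l as [|b l IH]; simpl; auto. destruct (E a b); simpl; auto.
Qed.

Lemma num_edges_perm E (E_sym : forall p q, E p q = E q p) l l' :
  Permutation l l' -> num_edges E l = num_edges E l'.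
Proof.
  induction 1 as [| x l l' Hp IH | x y l | l l' l'' _ IH1 _ IH2]; auto.
  - rewrite !num_edges_cons, IH, (Permutation_length (Permutation_filter _ _ _ Hp)). reflexivity.
  - rewrite !num_edges_cons. simpl. rewrite (E_sym y x). destruct (E x y); simpl; lia.
  - congruence.
Qed.

Lemma num_edges_le E l : 2 * INR (num_edges E l) <= INR (length l) * (INR (length l) - 1).
Proof.
  induction l as [|a l IH]; [simpl; lra|].
  rewrite num_edges_cons, plus_INR. change (length (a :: l)) with (S (length l)). rewrite S_INR.
  pose proof (filter_length_le (E a) l) as H.
  apply le_INR in H. pose proof (pos_INR (length l)). nra.
Qed.

Lemma num_edges_complete l :
  2 * INR (num_edges (fun _ _ => true) l) = INR (length l) * (INR (length l) - 1).
Proof.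
  induction l as [|a l IH]; [simpl; lra|].
  rewrite num_edges_cons, plus_INR, filter_true. change (length (a :: l)) with (S (length l)).
  rewrite S_INR. lra.
Qed.

Lemma filter_pairs_with (k : point -> bool) a (R : list point) :
  filter (fun pr => k (fst pr) && k (snd pr)) (map (fun b => (a, b)) R) =
  if k a then map (fun b => (a, b)) (filter k R) else [].
Proof.
  induction R as [|b R IH]; simpl; [destruct (k a); auto|].
  rewrite IH. destruct (k a), (k b); auto.
Qed.

Lemma list_prod_filter (k : point -> bool) (L R : list point) :
  list_prod (filter k L) (filter k R) = filter (fun pr => k (fst pr) && k (snd pr)) (list_prod L R).
Proof.
  induction L as [|a L IH]; simpl; auto.
  rewrite filter_app, <- IH, filter_pairs_with. destruct (k a); auto.
Qed.

Lemma crossing_edges_filter E k L R :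
  crossing_edges E (filter k L) (filter k R) =
  filter (fun pr => k (fst pr) && k (snd pr)) (crossing_edges E L R).
Proof.
  unfold crossing_edges. rewrite list_prod_filter, !filter_filter.
  apply filter_ext. intros pr. apply andb_comm.
Qed.

Definition point_eq_dec (p q : point) : {p = q} + {p <> q}.
Proof. decide equality; apply Req_EM_T. Defined.

Definition memb (S : list point) (p : point) : bool := if in_dec point_eq_dec p S then true else false.

Lemma memb_spec S p : memb S p = true <-> In p S.
Proof. unfold memb; destruct (in_dec point_eq_dec p S); split; auto; discriminate. Qed.

Lemma filter_memb_perm S P : NoDup S -> NoDup P -> incl S P -> Permutation S (filter (memb S) P).
Proof.
  intros HS HP HI. apply NoDup_Permutation; auto using NoDup_filter.
  intros x; rewrite filter_In, memb_spec. split; [intros; split; auto|tauto].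
Qed.

(** * Nets *)

(* The points of [Q] in [K] are selected by a boolean [k], as [K] need not be decidable. *)
Definition point_net (Q TQ : list point) (M : R) : Prop :=
  forall K (k : point -> bool), convex K -> (forall p, In p Q -> k p = true -> K p) ->
    ~ meets TQ K -> INR (length (filter k Q)) <= M.

Definition edge_net (E : point -> point -> bool) (Q TQ : list point) (a M : R) : Prop :=
  forall K (k : point -> bool), convex K -> (forall p, In p Q -> k p = true -> K p) ->
    ~ meets TQ K ->
    INR (num_edges E (filter k Q)) <= a + INR (length (filter k Q)) * (M - 1) / 2.

Lemma wenet_point_net x f B Q : 0 <= x -> wenet_bound x f -> NoDup Q -> (length Q <= B)%nat ->
  exists TQ, (length TQ <= f)%nat /\ point_net Q TQ (x * INR B).
Proof.
  intros Hx Hw HQ HB. apply le_INR in HB.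
  destruct Q as [|q Q'].
  { exists []; split; [simpl; lia|]. intros K k _ _ _. simpl. pose proof (pos_INR B). nra. }
  destruct (Hw (q :: Q') HQ ltac:(discriminate)) as (TQ & HTQ & Hmeets).
  exists TQ; split; auto. intros K k HK Hk Hmiss.
  apply Rnot_lt_le. intros Hlt. apply Hmiss, Hmeets; auto.
  exists (filter k (q :: Q')). repeat split.
  - apply NoDup_filter; auto.
  - intros p Hp. apply filter_In in Hp; tauto.
  - apply Forall_forall. intros p Hp. apply filter_In in Hp as [Hp Kp]. auto.
  - pose proof (Rmult_le_compat_l x _ _ Hx HB). lra.
Qed.

Lemma point_net_edge_net E Q TQ M : point_net Q TQ M -> edge_net E Q TQ 0 M.
Proof.
  intros Hnet K k HK Hk Hmiss. specialize (Hnet K k HK Hk Hmiss).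
  pose proof (num_edges_le E (filter k Q)). pose proof (pos_INR (length (filter k Q))). nra.
Qed.

(* Edges of [K] between the two halves are caught by the pair net [Z] unless fewer than [T]. *)
Lemma edge_net_merge E (E_sym : forall p q, E p q = E q p) Q L R TL TR Z T a M :
  Permutation Q (L ++ R) -> edge_net E L TL a M -> edge_net E R TR a M ->
  pair_net (crossing_edges E L R) T Z ->
  edge_net E Q (TL ++ TR ++ Z) (2 * a + (INR T - 1)) M.
Proof.
  intros HQ HL HR HZ K k HK Hk Hmiss.
  assert (HinL : forall p, In p L -> In p Q)
    by (intros p Hp; apply (Permutation_in _ (Permutation_sym HQ)), in_or_app; auto).
  assert (HinR : forall p, In p R -> In p Q)
    by (intros p Hp; apply (Permutation_in _ (Permutation_sym HQ)), in_or_app; auto).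
  assert (HmissL : ~ meets TL K)
    by (intros (t & Ht & Kt); apply Hmiss; exists t; rewrite !in_app_iff; auto).
  assert (HmissR : ~ meets TR K)
    by (intros (t & Ht & Kt); apply Hmiss; exists t; rewrite !in_app_iff; auto).
  assert (Hcross : (length (crossing_edges E (filter k L) (filter k R)) + 1 <= T)%nat).
  { rewrite crossing_edges_filter.
    destruct (Nat.le_gt_cases T (length (filter (fun pr => k (fst pr) && k (snd pr))
                                          (crossing_edges E L R)))) as [Hc|Hc]; [|lia].
    assert (Hends : forall pr, In pr (crossing_edges E L R) ->
              k (fst pr) && k (snd pr) = true -> K (fst pr) /\ K (snd pr)).
    { intros [p q] Hpr Gpr. apply andb_prop in Gpr as [G1 G2].
      apply filter_In in Hpr as [Hpr _]. apply in_prod_iff in Hpr as [H1 H2]. auto. }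
    destruct (HZ _ K HK Hends Hc) as (z & Hz & Kz).
    exfalso. apply Hmiss. exists z. rewrite !in_app_iff. auto. }
  apply le_INR in Hcross. rewrite plus_INR, INR_1 in Hcross.
  pose proof (HL K k HK (fun p Hp => Hk p (HinL p Hp)) HmissL).
  pose proof (HR K k HK (fun p Hp => Hk p (HinR p Hp)) HmissR).
  pose proof (Permutation_filter k _ _ HQ) as HkQ. rewrite filter_app in HkQ.
  rewrite (num_edges_perm E E_sym _ _ HkQ), (Permutation_length HkQ), num_edges_app.
  rewrite length_app, !plus_INR. lra.
Qed.

Lemma INR_le_div a b T : (a * T <= b)%nat -> (0 < T)%nat -> INR a <= INR b / INR T.
Proof.
  intros H HT. apply le_INR in H. apply lt_0_INR in HT. rewrite mult_INR in H.
  apply Rmult_le_reg_r with (INR T); auto. unfold Rdiv. rewrite Rmult_assoc, Rinv_l; lra.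
Qed.

Lemma nat_ceil (y : R) : 0 < y -> exists N : nat, (0 < N)%nat /\ y <= INR N <= y + 1.
Proof.
  intros Hy. destruct (archimed y) as [H1 H2].
  assert (Hz : (0 < up y)%Z) by (apply lt_0_IZR; lra).
  exists (Z.to_nat (up y)).
  assert (E : INR (Z.to_nat (up y)) = IZR (up y)) by (rewrite INR_IZR_INZ, Z2Nat.id; [reflexivity|lia]).
  split; [apply INR_lt; rewrite E; simpl; lra|rewrite E; lra].
Qed.

Section HalvingTree.
Variables (E : point -> point -> bool) (B f T : nat) (M : R).
Hypothesis E_sym : forall p q, E p q = E q p.
Hypothesis T_pos : (0 < T)%nat.
Hypothesis leaf_net : forall Q, NoDup Q -> (length Q <= B)%nat ->
  exists TQ, (length TQ <= f)%nat /\ point_net Q TQ M.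

(* Split [Q] [d] times by vertical lines into at most [2^d] groups of at most [B] points,
   put a leaf net in each group and a pair net of threshold [T] on each splitting line. *)
Lemma halving_tree_net d : forall Q, NoDup Q -> (length Q <= 2 ^ d * B)%nat ->
  exists TQ, INR (length TQ) <= INR (2 ^ d) * INR f + INR (num_edges E Q) / INR T /\
    edge_net E Q TQ ((INR (2 ^ d) - 1) * (INR T - 1)) M.
Proof.
  induction d as [|d IH]; intros Q HQ HB.
  - destruct (leaf_net Q HQ ltac:(simpl in HB; lia)) as (TQ & HTQ & Hnet).
    exists TQ; split.
    + apply le_INR in HTQ. pose proof (INR_le_div 0 (num_edges E Q) T ltac:(lia) T_pos).
      change (INR 0) with 0 in *. rewrite Nat.pow_0_r, INR_1. lra.
    + replace ((INR (2 ^ 0) - 1) * (INR T - 1)) with 0 by (simpl; ring).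
      apply point_net_edge_net; auto.
  - rewrite Nat.pow_succ_r' in HB |- *.
    destruct (vertical_halving Q (Nat.min (length Q) (2 ^ d * B)) ltac:(lia))
      as (L & R & x0 & HQLR & HL & Hleft & Hright).
    pose proof (Permutation_length HQLR) as Hlen. rewrite length_app in Hlen.
    pose proof (Permutation_NoDup HQLR HQ) as HLR.
    destruct (IH L (NoDup_app_remove_r _ _ HLR) ltac:(lia)) as (TL & HTL & HnetL).
    destruct (IH R (NoDup_app_remove_l _ _ HLR) ltac:(lia)) as (TR & HTR & HnetR).
    destruct (vertical_pair_net_exists x0 (crossing_edges E L R) T T_pos) as (Z & HZ & HnetZ).
    { intros [p q] Hpq. apply filter_In in Hpq as [Hpq _]. apply in_prod_iff in Hpq.
      simpl. split; [apply Hleft|apply Hright]; tauto. }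
    exists (TL ++ TR ++ Z); split.
    + apply INR_le_div in HZ; auto.
      rewrite (num_edges_perm E E_sym _ _ HQLR), num_edges_app, !length_app, !plus_INR, mult_INR.
      unfold Rdiv in *. rewrite !Rmult_plus_distr_r. simpl (INR 2). lra.
    + replace ((INR (2 * 2 ^ d) - 1) * (INR T - 1))
        with (2 * ((INR (2 ^ d) - 1) * (INR T - 1)) + (INR T - 1)) by (rewrite mult_INR; simpl; ring).
      apply (edge_net_merge E E_sym Q L R); auto.
Qed.

End HalvingTree.

(** * Weak epsilon-nets *)

Lemma wenet_bound_large x : 1 < x -> wenet_bound x 0.
Proof.
  intros Hx P' HP Hne. exists []; split; auto. intros K _ (S & HS & HI & _ & Hl). exfalso.
  pose proof (le_INR _ _ (NoDup_incl_length HS HI)).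
  assert (0 < INR (length P')) by (apply lt_0_INR; destruct P'; [congruence|simpl; lia]).
  nra.
Qed.

Lemma wenet_bound_one x : 1 <= x -> wenet_bound x 1.
Proof.
  intros Hx P' HP Hne. destruct P' as [|p P'']; [congruence|].
  exists [p]; split; auto. intros K _ (S & HS & HI & HF & Hl).
  assert (Hle : (length (p :: P'') <= length S)%nat).
  { apply INR_le. pose proof (pos_INR (length (p :: P''))). nra. }
  exists p; split; [left; auto|]. rewrite Forall_forall in HF.
  apply HF, (NoDup_length_incl HS Hle HI). left; auto.
Qed.

Lemma wenet_bound_pos x f : 0 < x <= 1 -> wenet_bound x f -> (1 <= f)%nat.
Proof.
  intros Hx Hw. destruct (Hw [(0, 0)]) as (T & HT & Hmeets); [repeat constructor; auto|discriminate|].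
  destruct (Hmeets (fun _ => True)) as (t & Ht & _).
  - intros p q s _ _ _; auto.
  - exists [(0, 0)]. split; [repeat constructor; auto|].
    split; [intros p Hp; exact Hp|]. split; [repeat constructor|].
    simpl length. rewrite INR_1. lra.
  - destruct T; [contradiction|]. simpl in HT; lia.
Qed.

Lemma meets_of_sublist K (S T : list point) : incl S T -> Forall K S -> S <> [] -> meets T K.
Proof.
  intros HI HF HS. destruct S as [|s S]; [congruence|].
  exists s. split; [apply HI; left; auto|]. inversion HF; auto.
Qed.

Lemma halving_count_absurd x n s : 0 < x -> 5 <= n -> x * n <= s ->
  s * s <= x ^ 2 * n ^ 2 / 8 + 5 / 8 * x * (n + 1) * s -> False.
Proof.
  intros Hx Hn Hs H.
  assert (Hxn : 0 < x * n) by nra.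
  assert (Hxs : 0 <= x * s) by nra.
  assert (0 <= x * s * (n - 5)) by (apply Rmult_le_pos; lra).
  assert (5 / 8 * x * (n + 1) * s <= 3 / 4 * x * n * s) by nra.
  assert (0 <= (s - x * n) * (s + x * n / 4)) by (apply Rmult_le_pos; lra).
  nra.
Qed.

(* Halving with the complete graph: a convex set missing the net has few points in each
   half, so many points of it lie on both sides and span many crossing segments. *)
Lemma wenet_bound_step x f N : 0 < x -> wenet_bound (5 / 4 * x) f -> 8 / x ^ 2 <= INR N ->
  wenet_bound x (5 + 2 * f + N).
Proof.
  intros Hx Hw HN P' HP Hne. set (n := length P').
  assert (Hn : 1 <= INR n) by (apply (le_INR 1); unfold n; destruct P'; [congruence|simpl; lia]).
  destruct (Nat.le_gt_cases n 5) as [Hsmall|Hbig].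
  { exists P'; split; [lia|]. intros K _ (S & _ & HI & HF & Hl).
    apply (meets_of_sublist K S); auto. intros ->. simpl in Hl. nra. }
  set (B := ((n + 1) / 2)%nat).
  assert (HB : (n <= 2 * B)%nat /\ (2 * B <= n + 1)%nat).
  { pose proof (Nat.div_mod_eq (n + 1) 2). pose proof (Nat.mod_upper_bound (n + 1) 2). unfold B. lia. }
  destruct (nat_ceil (x ^ 2 * INR n ^ 2 / 16)) as (T & HT0 & HT1 & HT2).
  { apply Rdiv_lt_0_compat; [apply Rmult_lt_0_compat; apply pow_lt|]; lra. }
  destruct (halving_tree_net (fun _ _ => true) B f T (5 / 4 * x * INR B) (fun _ _ => eq_refl) HT0
              (fun Q HQ HQB => wenet_point_net (5 / 4 * x) f B Q ltac:(lra) Hw HQ HQB) 1 P' HP)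
    as (TQ & HTQ & Hnet); [simpl; lia|].
  change (2 ^ 1)%nat with 2%nat in HTQ, Hnet.
  pose proof (num_edges_complete P') as Hedges. fold n in Hedges.
  exists TQ; split.
  - assert (HeT : INR (num_edges (fun _ _ => true) P') / INR T <= 8 / x ^ 2).
    { assert (0 < INR T) by (apply lt_0_INR; lia).
      apply Rmult_le_reg_r with (INR T * x ^ 2); [apply Rmult_lt_0_compat; [|apply pow_lt]; lra|].
      replace (8 / x ^ 2 * (INR T * x ^ 2)) with (8 * INR T) by (field; lra).
      unfold Rdiv. rewrite Rmult_assoc, <- (Rmult_assoc (/ INR T)), Rinv_l, Rmult_1_l by lra.
      nra. }
    apply INR_le. rewrite !plus_INR, mult_INR. simpl (INR 2) in *. simpl (INR 5). lra.
  - intros K HK (S & HS & HI & HF & Hl). apply NNPP. intros Hmiss.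
    assert (HS' := filter_memb_perm S P' HS HP HI).
    assert (Hcount : forall p, In p P' -> memb S p = true -> K p).
    { intros p _ Hp. apply memb_spec in Hp. rewrite Forall_forall in HF. auto. }
    specialize (Hnet K (memb S) HK Hcount Hmiss).
    pose proof (num_edges_complete (filter (memb S) P')) as Hedges'.
    rewrite <- (Permutation_length HS') in Hnet, Hedges'.
    set (s := INR (length S)) in *. fold n in Hl.
    assert (HBn : 2 * INR B <= INR n + 1)
      by (destruct HB as [_ HB]; apply le_INR in HB; rewrite mult_INR, plus_INR in HB; simpl in HB; lra).
    assert (Hs : 0 <= s) by apply pos_INR.
    apply (halving_count_absurd x (INR n) s); auto.
    + apply lt_INR in Hbig. simpl in Hbig. lra.
    + simpl (INR 2) in Hnet.
      assert (0 <= x * s * (INR n + 1 - 2 * INR B)) by (apply Rmult_le_pos; [apply Rmult_le_pos|]; lra).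
      nra.
Qed.

Lemma wenet_bound_exists x : 0 < x -> exists f, wenet_bound x f.
Proof.
  intros Hx. destruct (Pow_x_infinity (5 / 4) ltac:(rewrite Rabs_pos_eq; lra) (2 / x)) as [k Hk].
  specialize (Hk k (le_n k)). rewrite Rabs_pos_eq in Hk by (apply pow_le; lra).
  assert (Hgrow : 1 < x * (5 / 4) ^ k).
  { assert (x * (2 / x) = 2) by (field; lra). nra. }
  clear Hk. revert x Hx Hgrow. induction k as [|k IH]; intros x Hx Hgrow.
  - exists 0%nat. apply wenet_bound_large. simpl in Hgrow. lra.
  - destruct (IH (5 / 4 * x)) as [f Hf]; [lra|simpl in Hgrow; lra|].
    destruct (nat_ceil (8 / x ^ 2)) as (N & _ & HN & _);
      [apply Rdiv_lt_0_compat; [lra|apply pow_lt; lra]|].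
    exists (5 + 2 * f + N)%nat. apply wenet_bound_step; auto.
Qed.

Lemma f2_spec x : 0 < x -> wenet_bound x (f2 x) /\ (1 <= f2 x)%nat.
Proof.
  intros Hx. unfold f2. destruct (Rle_dec 1 x) as [H|H].
  - split; [apply wenet_bound_one; auto|lia].
  - destruct (dec_inh_nat_subset_has_unique_least_element (wenet_bound x) (fun f => classic _)
                (wenet_bound_exists x Hx)) as (f & Hf & _).
    pose proof (epsilon_spec (inhabits 0%nat)
                  (fun f => wenet_bound x f /\ forall g, wenet_bound x g -> (f <= g)%nat)
                  (ex_intro _ f Hf)) as [Hw _].
    split; [exact Hw|apply (wenet_bound_pos x); [lra|exact Hw]].
Qed.

Lemma in_calK_meets_points P E eps sigma K : 0 < eps -> (0 < length P)%nat ->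
  in_calK P E eps sigma K -> meets P K.
Proof.
  intros Heps Hn (_ & PK & _ & HI & HF & Hlen & _).
  apply (meets_of_sublist K PK); auto. intros ->. apply lt_0_INR in Hn. simpl in Hlen. nra.
Qed.

Lemma dense_edges_absurd sigma m e a b : 0 < sigma <= 1 -> 0 < m ->
  a <= sigma * m ^ 2 / 4 -> b <= sigma * m / 4 ->
  sigma * (m * (m - 1) / 2) <= e -> e <= a + m * (b - 1) / 2 -> False.
Proof.
  intros Hs Hm Ha Hb Hlow Hup.
  assert (m * b <= sigma * m ^ 2 / 4) by nra.
  assert (0 < sigma * m ^ 2) by (apply Rmult_lt_0_compat; [|apply pow_lt]; lra).
  assert (0 <= m * (1 - sigma)) by (apply Rmult_le_pos; lra).
  nra.
Qed.

(* A restricted set has about [sigma m^2 / 2] edges among its [m >= eps n] points, more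
   than an edge net with these parameters lets a convex set avoiding it have. *)
Lemma edge_net_meets_restricted P E eps sigma TQ a M K :
  NoDup P -> (forall p q, E p q = E q p) -> 0 < eps -> 0 < sigma <= 1 -> (0 < length P)%nat ->
  edge_net E P TQ a M ->
  a <= sigma * (eps * INR (length P)) ^ 2 / 4 -> M <= sigma * (eps * INR (length P)) / 4 ->
  in_calK P E eps sigma K -> meets TQ K.
Proof.
  intros HP E_sym Heps Hsig Hn Hnet Ha HM (HK & PK & HPK & HI & HF & Hlen & Hdense).
  apply NNPP. intros Hmiss.
  assert (Hk : forall p, In p P -> memb PK p = true -> K p).
  { intros p _ Hp. apply memb_spec in Hp. rewrite Forall_forall in HF. auto. }
  specialize (Hnet K (memb PK) HK Hk Hmiss).
  pose proof (filter_memb_perm PK P HPK HP HI) as Hperm.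
  rewrite <- (Permutation_length Hperm), <- (num_edges_perm E E_sym _ _ Hperm) in Hnet.
  apply lt_0_INR in Hn.
  assert (Hm : 0 <= eps * INR (length P) <= INR (length PK)) by nra.
  pose proof (pow_incr _ _ 2 Hm).
  apply (dense_edges_absurd sigma (INR (length PK)) (INR (num_edges E PK)) a M); auto; nra.
Qed.

Lemma tree_net_cost r f e D d2 T : 1 <= r -> 0 <= f -> 0 <= e -> 0 < D ->
  d2 <= 2 * r -> D / (8 * r) <= T -> d2 * f + e / T <= 8 * (r * f + r ^ 2 * e / D).
Proof.
  intros Hr Hf He HD Hd HT.
  assert (HT0 : 0 < D / (8 * r)) by (apply Rdiv_lt_0_compat; lra).
  assert (e / T <= 8 * r * (e / D)).
  { replace (8 * r * (e / D)) with (e / (D / (8 * r))) by (field; lra).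
    apply Rmult_le_compat_l; [lra|]. apply Rinv_le_contravar; lra. }
  replace (r ^ 2 * e / D) with (r * r * (e / D)) by (field; lra).
  assert (0 <= e / D) by (apply Rmult_le_pos; [|apply Rlt_le, Rinv_0_lt_compat]; lra).
  assert (0 <= r * (r - 1) * (e / D)) by (apply Rmult_le_pos; [apply Rmult_le_pos|]; lra).
  nra.
Qed.

Lemma dyadic_between r : (1 <= r)%nat -> exists d, (r <= 2 ^ d)%nat /\ (2 ^ d < 2 * r)%nat.
Proof.
  intros Hr. destruct (Nat.eq_dec r 1) as [->|Hr1]; [exists 0%nat; simpl; lia|].
  pose proof (Nat.log2_up_spec r ltac:(lia)) as [H1 H2]. pose proof (Nat.log2_up_pos r ltac:(lia)).
  exists (Nat.log2_up r). split; auto.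
  destruct (Nat.log2_up r) as [|e]; [lia|]. rewrite Nat.pow_succ_r'. simpl in H1. lia.
Qed.

(* Parameters: [2^d ~ r] groups of at most [B ~ n / r] points, leaf nets for [f2] at
   [x = eps sigma r / 8] (so that [x B <= sigma eps n / 4]) and line threshold
   [T ~ sigma eps^2 n^2 / (8 r)] (so that [2^d T <= sigma (eps n)^2 / 4]). *)
Lemma restricted_transversal P E eps sigma r Fam :
  NoDup P -> (forall p q, E p q = E q p) -> 0 < eps <= 1 -> 0 < sigma <= 1 ->
  (1 <= r)%nat -> (r <= length P)%nat ->
  (forall K, Fam K -> in_calK P E eps sigma K) ->
  exists TQ, (forall K, Fam K -> meets TQ K) /\
    INR (length TQ) <= 8 * (INR r * INR (f2 (1 / 8 * eps * sigma * INR r))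
                            + INR r ^ 2 * INR (num_edges E P) / (sigma * eps ^ 2 * INR (length P) ^ 2)).
Proof.
  intros HP E_sym Heps Hsig Hr Hrn HFam.
  set (n := length P) in *. set (x := 1 / 8 * eps * sigma * INR r).
  assert (HrR : 1 <= INR r <= INR n) by (split; [apply (le_INR 1)|apply le_INR]; lia).
  assert (Hx : 0 < x) by (unfold x; repeat apply Rmult_lt_0_compat; lra).
  destruct (f2_spec x Hx) as [Hw _].
  destruct (dyadic_between r Hr) as (d & Hd1 & Hd2).
  set (B := ((n + r - 1) / r)%nat).
  assert (HB : (n <= r * B)%nat /\ (r * B <= 2 * n)%nat).
  { pose proof (Nat.div_mod_eq (n + r - 1) r).
    pose proof (Nat.mod_upper_bound (n + r - 1) r ltac:(lia)). unfold B. lia. }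
  set (t := sigma * eps ^ 2 * INR n ^ 2 / (8 * INR r)).
  assert (Ht : 0 < t)
    by (unfold t; apply Rdiv_lt_0_compat; repeat apply Rmult_lt_0_compat; try apply pow_lt; lra).
  destruct (nat_ceil t Ht) as (T & HT0 & HT1 & HT2).
  destruct (halving_tree_net E B (f2 x) T (x * INR B) E_sym HT0
              (fun Q HQ HQB => wenet_point_net x (f2 x) B Q ltac:(lra) Hw HQ HQB) d P HP)
    as (TQ & HTQ & Hnet); [nia|].
  apply le_INR in Hd1. apply lt_INR in Hd2. rewrite mult_INR in Hd2. simpl (INR 2) in Hd2.
  destruct HB as [_ HB]. apply le_INR in HB. rewrite !mult_INR in HB. simpl (INR 2) in HB.
  exists TQ; split.
  - intros K HK.
    refine (edge_net_meets_restricted P E eps sigma TQ _ _ K HP E_sym ltac:(lra) Hsig ltac:(lia)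
              Hnet _ _ (HFam K HK)).
    + fold n. assert (HT : 0 <= INR T - 1 <= t) by (apply (le_INR 1) in HT0; simpl in HT0; lra).
      apply Rle_trans with (2 * INR r * t); [apply Rmult_le_compat; lra|].
      right. unfold t. field. lra.
    + fold n. unfold x.
      assert (0 <= eps * sigma * (2 * INR n - INR r * INR B))
        by (apply Rmult_le_pos; [apply Rmult_le_pos|]; lra).
      nra.
  - eapply Rle_trans; [exact HTQ|]. fold n.
    apply tree_net_cost; try apply pos_INR; auto; try lra.
    repeat apply Rmult_lt_0_compat; try apply pow_lt; lra.
Qed.

Theorem mainTheorem4 :
  exists C c : R, 0 < C /\ 0 < c /\
  forall (P : list point) (E : point -> point -> bool) (eps sigma : R) (r : nat),
    (0 < length P)%nat ->
    general_position P ->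
    (forall p q, E p q = E q p) ->
    0 < eps <= 1 -> 0 < sigma <= 1 -> (1 <= r)%nat ->
    forall Fam : (point -> Prop) -> Prop,
      (forall K, Fam K -> in_calK P E eps sigma K) ->
      exists T : list point,
        (forall K, Fam K -> exists t, In t T /\ K t) /\
        INR (length T) <=
          C * (INR r * INR (f2 (c * eps * sigma * INR r))
               + (INR r ^ 2 * INR (num_edges E P))
                 / (sigma * eps ^ 2 * INR (length P) ^ 2)).
Proof.
  exists 8, (1 / 8). split; [lra|]. split; [lra|].
  intros P E eps sigma r Hn [HP _] E_sym Heps Hsig Hr Fam HFam.
  destruct (Nat.le_gt_cases r (length P)) as [Hrn|Hrn].
  - exact (restricted_transversal P E eps sigma r Fam HP E_sym Heps Hsig Hr Hrn HFam).
  - exists P; split; [intros K HK; apply (in_calK_meets_points P E eps sigma K); auto; lra|].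
    apply lt_INR in Hrn. pose proof (lt_0_INR _ Hn). pose proof (lt_0_INR _ Hr).
    destruct (f2_spec (1 / 8 * eps * sigma * INR r)) as [_ Hf];
      [repeat apply Rmult_lt_0_compat; lra|].
    apply (le_INR 1) in Hf. simpl in Hf.
    assert (0 <= INR r ^ 2 * INR (num_edges E P) / (sigma * eps ^ 2 * INR (length P) ^ 2)).
    { apply Rmult_le_pos; [apply Rmult_le_pos; [apply pow_le; lra|apply pos_INR]|].
      apply Rlt_le, Rinv_0_lt_compat. repeat apply Rmult_lt_0_compat; try apply pow_lt; lra. }
    nra.
Qed.
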